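(* If $n$ is large enough, then $\mathrm{ex}^{\mathrm{col}}(n,(C_4,K_2),F_2)=\binom{\lfloor n/2\rfloor}{2}\binom{\lceil n/2\rceil}{2}+1$.
   Context: $F_2$ (the 2-fan) is the graph consisting of two triangles sharing exactly one vertex. $C_4$ is the 4-cycle. $\mathcal N(H,G)$ is the number of subgraphs of $G$ isomorphic to $H$. For a graph $G$ with edges colored $1,2$, $G_i$ is the subgraph of edges of color $i$; $\mathrm{ex}^{\mathrm{col}}(n,(H_1,H_2),F)$ is the maximum of $\mathcal N(H_1,G_1)+\mathcal N(H_2,G_2)$ over all $F$-free $n$-vertex graphs $G$ and all 2-colorings of their edges. *)

From mathcomp Require Import all_boot.
Set Implicit Arguments. Unset Strict Implicit. Unset Printing Implicit Defensive.

Definition simple_graph n (E : {set {set 'I_n}}) : Prop :=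
  forall e, e \in E -> #|e| = 2.

(* Number of subgraphs of the graph with edge set E (on 'I_n) isomorphic to the
   graph H with edge set EH (on 'I_k).  A subgraph is a pair (W, S) with
   W a vertex set and S a set of edges of E; it is isomorphic to H iff there
   is a bijection f : 'I_k -> W carrying the edges of H exactly onto S. *)
Definition copies k (EH : {set {set 'I_k}}) n (E : {set {set 'I_n}}) : nat :=
  #|[set p : {set 'I_n} * {set {set 'I_n}} |
      (p.2 \subset E) &&
      [exists f : {ffun 'I_k -> 'I_n},
         [&& injectiveb f, p.1 == f @: setT & p.2 == [set f @: e | e : {set 'I_k} in EH]]]]|.

Definition edge k (a b : nat) : {set 'I_k.+1} := [set inord a; inord b].

Definition K2 : {set {set 'I_2}} := [set edge 1 0 1].
Definition C4 : {set {set 'I_4}} :=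
  [set edge 3 0 1; edge 3 1 2; edge 3 2 3; edge 3 3 0].
Definition F2 : {set {set 'I_5}} :=
  [set edge 4 0 1; edge 4 0 2; edge 4 1 2; edge 4 0 3; edge 4 0 4; edge 4 3 4].

(* A 2-colouring of the edges: c e = true means colour 1, false colour 2. *)
Definition colour_class n (E : {set {set 'I_n}}) (c : {set 'I_n} -> bool)
  (b : bool) : {set {set 'I_n}} := [set e in E | c e == b].

Definition col_count k1 (H1 : {set {set 'I_k1}}) k2 (H2 : {set {set 'I_k2}})
  n (E : {set {set 'I_n}}) (c : {set 'I_n} -> bool) : nat :=
  copies H1 (colour_class E c true) + copies H2 (colour_class E c false).

Definition free k (F : {set {set 'I_k}}) n (E : {set {set 'I_n}}) : Prop :=
  copies F E = 0.

From mathcomp Require Import all_boot zify.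
Set Implicit Arguments. Unset Strict Implicit. Unset Printing Implicit Defensive.

(* Let Phi(U) be the number of colour-1 four-cycles plus colour-2 edges inside
   a vertex set U of a 2-coloured F2-free graph, and T(k) =
   C(floor(k/2),2) C(ceil(k/2),2).  We prove Phi(U) <= T(|U|) + 1 by induction,
   deleting a vertex v of degree at most |U|/2.  Such a vertex exists once
   |U| >= 6: otherwise every edge lies in a triangle, each neighbourhood is a
   star, and two triangles meeting in one vertex appear.  Deleting v destroys at
   most sum_z C(codeg1(v,z), 2) four-cycles and deg2(v) colour-2 edges, and
   F2-freeness keeps the colour-1 codegrees small enough that this loss is
   below T(k) - T(k-1), unless N1(v) has exactly k/2 vertices, all joined in
   colour 1 to the rest of U.  Then U carries a complete bipartite colour-1
   graph with parts of sizes floor(k/2) and ceil(k/2); it has at most T(k)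
   four-cycles, and F2-freeness leaves room for only one more edge.  That
   complete bipartite graph plus one colour-2 edge inside a part attains the
   bound. *)

Lemma set2_inj (T : finType) (a b c d : T) : [set a; b] = [set c; d] ->
  (a = c /\ b = d) \/ (a = d /\ b = c).
Proof.
move=> E.
have: a \in [set c; d] by rewrite -E !inE eqxx.
have: b \in [set c; d] by rewrite -E !inE eqxx orbT.
have: c \in [set a; b] by rewrite E !inE eqxx.
have: d \in [set a; b] by rewrite E !inE eqxx orbT.
rewrite !inE => /pred2P h1 /pred2P h2 /pred2P h3 /pred2P h4.
by case: h1 => ?; case: h2 => ?; case: h3 => ?; case: h4 => ?; subst; auto.
Qed.

Lemma leq_card_bigcup (I T : finType) (X : {set I}) (F : I -> {set T}) :
  #|\bigcup_(i in X) F i| <= \sum_(i in X) #|F i|.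
Proof.
apply: (big_ind2 (fun (A : {set T}) s => #|A| <= s)) => //.
- by rewrite cards0.
- move=> A1 s1 A2 s2 h1 h2; apply: leq_trans (leq_card_setU _ _) _.
  exact: leq_add.
Qed.

Lemma leq_card_setD1 (T : finType) (A : {set T}) x : #|A| <= #|A :\ x|.+1.
Proof. by rewrite (cardsD1 x A); case: (x \in A). Qed.

Lemma leq_card_setD2 (T : finType) (A : {set T}) x y : #|A| <= #|A :\ x :\ y|.+2.
Proof. by have := leq_card_setD1 A x; have := leq_card_setD1 (A :\ x) y; lia. Qed.

Lemma leq_card_setD3 (T : finType) (A : {set T}) x y z :
  #|A| <= #|A :\ x :\ y :\ z|.+3.
Proof. by have := leq_card_setD2 A x y; have := leq_card_setD1 (A :\ x :\ y) z; lia. Qed.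

Lemma injectiveb_nth (T : eqType) k (s : seq T) x0 :
  uniq s -> size s = k -> injectiveb [ffun i : 'I_k => nth x0 s i].
Proof.
move=> us sz; apply/injectiveP => i j; rewrite !ffunE => /eqP.
rewrite nth_uniq ?sz ?ltn_ord // => /eqP h; exact: val_inj.
Qed.

Lemma inord_neq (T : eqType) k (f : 'I_k.+1 -> T) i j :
  injective f -> i <= k -> j <= k -> i != j -> f (inord i) != f (inord j).
Proof.
move=> fi hi hj hij; apply/negP => /eqP /fi /(congr1 val) /=.
by rewrite !inordK //; apply/eqP.
Qed.

Lemma pick_other3 (T : eqType) (a b c z p : T) : a != b -> b != c -> c != a ->
  exists2 r, (r == a) || (r == b) || (r == c) & (r != z) && (r != p).
Proof.
move=> ab bc ca.
case: (boolP ((a != z) && (a != p))) => ha; first by exists a; rewrite ?eqxx.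
case: (boolP ((b != z) && (b != p))) => hb; first by exists b; rewrite ?eqxx ?orbT.
exists c; first by rewrite eqxx !orbT.
move: ha hb; rewrite !negb_and !negbK => ha hb.
apply/andP; split; apply/negP => /eqP ec; subst c;
  case/orP: ha => /eqP ea; case/orP: hb => /eqP eb; subst;
  move: ab bc ca; by rewrite ?eqxx.
Qed.

Definition copy_set k (H : {set {set 'I_k}}) n (E : {set {set 'I_n}}) :=
  [set p : {set 'I_n} * {set {set 'I_n}} |
      (p.2 \subset E) &&
      [exists f : {ffun 'I_k -> 'I_n},
         [&& injectiveb f, p.1 == f @: setT & p.2 == [set f @: e | e : {set 'I_k} in H]]]].

Lemma card_copy_set k (H : {set {set 'I_k}}) n (E : {set {set 'I_n}}) :
  #|copy_set H E| = copies H E.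
Proof. by []. Qed.

Lemma setT_ord2 : [set: 'I_2] = [set inord 0; inord 1].
Proof.
apply/setP => x; rewrite !inE.
have: x = inord x by apply: val_inj; rewrite /= inordK.
case: x => [[|[|m]] hx] //= ->; by rewrite eqxx ?orbT.
Qed.

Lemma setT_ord4 : [set: 'I_4] = [set inord 0; inord 1; inord 2; inord 3].
Proof.
apply/setP => x; rewrite !inE.
have: x = inord x by apply: val_inj; rewrite /= inordK.
case: x => [[|[|[|[|m]]]] hx] //= ->; by rewrite eqxx ?orbT.
Qed.

Lemma copies_K2 n (E : {set {set 'I_n}}) : simple_graph E -> copies K2 E = #|E|.
Proof.
move=> sE; rewrite -card_copy_set.
have -> : copy_set K2 E = [set (e, [set e]) | e in E].
  apply/setP => -[W S]; rewrite inE /=.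
  apply/idP/idP.
  - case/andP=> sub /existsP[f /and3P[/injectiveP fi /eqP e1 /eqP e2]].
    rewrite /K2 /edge imset_set1 imsetU !imset_set1 in e2.
    rewrite setT_ord2 imsetU !imset_set1 in e1.
    subst; apply/imsetP; exists [set f (inord 0); f (inord 1)] => //.
    by move/subsetP: sub; apply; rewrite inE.
  - case/imsetP => e eE [-> ->].
    have /eqP/cards2P [x [y [xy ee]]] := sE e eE; subst e.
    rewrite sub1set eE /=; apply/existsP.
    exists [ffun i : 'I_2 => nth x [:: x; y] i].
    rewrite injectiveb_nth //=; last by rewrite andbT inE.
    rewrite setT_ord2 /K2 imset_set1 /edge !imsetU !imset_set1.
    by rewrite !ffunE !inordK //= !eqxx.
by apply: card_imset => e1 e2 [].
Qed.

Definition c4_edges (T : finType) (a b c d : T) : {set {set T}} :=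
  [set [set a; b]; [set b; c]; [set c; d]; [set d; a]].

Lemma C4_image n (f : {ffun 'I_4 -> 'I_n}) : [set f @: e | e : {set 'I_4} in C4] =
  c4_edges (f (inord 0)) (f (inord 1)) (f (inord 2)) (f (inord 3)).
Proof. by rewrite /C4 /edge /c4_edges !imsetU !imset_set1 !imsetU !imset_set1. Qed.

Lemma copy_set_C4P n (E : {set {set 'I_n}}) (p : {set 'I_n} * {set {set 'I_n}}) :
  reflect (p.2 \subset E /\ exists a b c d : 'I_n,
             [/\ uniq [:: a; b; c; d], p.1 = [set a; b; c; d] & p.2 = c4_edges a b c d])
          (p \in copy_set C4 E).
Proof.
apply: (iffP idP).
- rewrite inE => /andP[sub /existsP[f /and3P[/injectiveP fi /eqP e1 /eqP e2]]].
  split=> //.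
  exists (f (inord 0)), (f (inord 1)), (f (inord 2)), (f (inord 3)); split.
  + by rewrite /= !inE !negb_or !inord_neq.
  + by rewrite e1 setT_ord4 !imsetU !imset_set1.
  + by rewrite e2 C4_image.
- case=> sub [a [b [c [d [u e1 e2]]]]].
  rewrite inE sub /=; apply/existsP.
  exists [ffun i : 'I_4 => nth a [:: a; b; c; d] i].
  rewrite injectiveb_nth //= e1 e2 C4_image setT_ord4 !imsetU !imset_set1 !ffunE.
  by rewrite !inordK //= !eqxx.
Qed.

Lemma F2_image n (f : {ffun 'I_5 -> 'I_n}) : [set f @: e | e : {set 'I_5} in F2] =
  [set [set f (inord 0); f (inord 1)]; [set f (inord 0); f (inord 2)];
       [set f (inord 1); f (inord 2)]; [set f (inord 0); f (inord 3)];
       [set f (inord 0); f (inord 4)]; [set f (inord 3); f (inord 4)]].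
Proof. by rewrite /F2 /edge !imsetU !imset_set1 !imsetU !imset_set1. Qed.

Lemma free_F2_no_fan n (E : {set {set 'I_n}}) : free F2 E ->
  forall u a b p q : 'I_n, uniq [:: u; a; b; p; q] ->
  [set u; a] \in E -> [set u; b] \in E -> [set a; b] \in E ->
  [set u; p] \in E -> [set u; q] \in E -> [set p; q] \in E -> False.
Proof.
move=> fr u a b p q un h1 h2 h3 h4 h5 h6.
suff : 0 < copies F2 E by rewrite fr.
rewrite -card_copy_set; apply/card_gt0P.
pose f := [ffun i : 'I_5 => nth u [:: u; a; b; p; q] i].
exists (f @: setT, [set f @: e | e : {set 'I_5} in F2]).
rewrite inE /=; apply/andP; split.
  rewrite F2_image /f !ffunE !inordK //=.
  apply/subsetP => e; rewrite !inE => H.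
  by repeat case/orP: H => H; move/eqP: H => ->.
by apply/existsP; exists f; rewrite injectiveb_nth //= !eqxx.
Qed.

Lemma copy_set_F2_fan n (E : {set {set 'I_n}}) p : p \in copy_set F2 E ->
  exists g : nat -> 'I_n,
  [/\ uniq [:: g 0; g 1; g 2; g 3; g 4],
     [set g 0; g 1] \in E, [set g 0; g 2] \in E, [set g 1; g 2] \in E &
     [/\ [set g 0; g 3] \in E, [set g 0; g 4] \in E & [set g 3; g 4] \in E]].
Proof.
rewrite inE => /andP[sub /existsP[f /and3P[/injectiveP fi _ /eqP e2]]].
exists (fun i => f (inord i)).
rewrite F2_image in e2; move/subsetP: sub; rewrite e2 => sub.
split; first by rewrite /= !inE !negb_or !inord_neq.
all: try split.
all: by apply: sub; rewrite !inE eqxx ?orbT.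
Qed.

Lemma c4_edges_rot (T : finType) (a b c d : T) : c4_edges a b c d = c4_edges b c d a.
Proof.
apply/setP => x; rewrite !inE.
by case: (x == [set a; b]); case: (x == [set b; c]); case: (x == [set c; d]);
   case: (x == [set d; a]).
Qed.

Lemma set4_rot (T : finType) (a b c d : T) : [set a; b; c; d] = [set b; c; d; a].
Proof.
apply/setP => x; rewrite !inE.
by case: (x == a); case: (x == b); case: (x == c); case: (x == d).
Qed.

Lemma uniq4_rot (T : eqType) (a b c d : T) : uniq [:: a; b; c; d] = uniq [:: b; c; d; a].
Proof. by apply: perm_uniq; rewrite (perm_catC [:: a]). Qed.

Lemma c4_edges_diag (T : finType) (a b c d : T) : c4_edges a b c d =
  [set [set a; x] | x in [set b; d]] :|: [set [set c; x] | x in [set b; d]].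
Proof.
rewrite !imsetU !imset_set1 /c4_edges (setUC [set c] [set b]) (setUC [set a] [set d]).
apply/setP => x; rewrite !inE.
by case: (x == [set a; b]); case: (x == [set b; c]); case: (x == [set c; d]);
   case: (x == [set d; a]).
Qed.

Lemma set4_diag (T : finType) (a b c d : T) : [set a; b; c; d] = a |: (c |: [set b; d]).
Proof.
apply/setP => x; rewrite !inE.
by case: (x == a); case: (x == b); case: (x == c); case: (x == d).
Qed.

(* [bip_c4_at k x] counts the four-cycles through a vertex of the larger part
   of the complete bipartite graph K_{x, k-x}: each of the other k-1-x vertices
   of that part shares all x neighbours with it. *)
Definition bip_c4_at k x := (k - 1 - x) * 'C(x, 2).

Definition target k := 'C(k./2, 2) * 'C(uphalf k, 2).

Lemma bin2_mul2 m : 'C(m, 2) * 2 = m * m.-1.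
Proof.
elim: m => [|m IH] //.
rewrite binS bin1 mulnDl IH; case: m {IH} => //= m; lia.
Qed.

Lemma bin2S m : 'C(m.+1, 2) = 'C(m, 2) + m.
Proof. by rewrite binS bin1. Qed.

Lemma bip_c4_at_mono k x y : x <= y -> y * 2 <= k -> bip_c4_at k x <= bip_c4_at k y.
Proof.
move=> xy; elim: y xy => [|y IH] xy hy; first by case: x xy.
case: (ltngtP x y.+1) xy => // [lt|->] _; last done.
apply: leq_trans (IH lt _) _; first by lia.
rewrite /bip_c4_at bin2S; have := bin2_mul2 y; nia.
Qed.

Lemma bip_c4_at_half_gap k : 8 <= k ->
  bip_c4_at k (k./2).-1 + k./2 + 1 <= bip_c4_at k k./2.
Proof.
move=> hk; rewrite /bip_c4_at.
have [h eh] : exists h, k./2 = h.+1 by exists (k./2).-1; lia.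
rewrite eh bin2S /=; have := bin2_mul2 h; nia.
Qed.

Lemma half_cases k : exists a, (k = a * 2 /\ k./2 = a /\ uphalf k = a) \/
                              (k = (a * 2).+1 /\ k./2 = a /\ uphalf k = a.+1).
Proof. by exists k./2; case: (boolP (odd k)) => ok; [right|left]; lia. Qed.

Lemma target_rec k : 0 < k -> target k.-1 + bip_c4_at k k./2 = target k.
Proof.
move=> hk; rewrite /target /bip_c4_at.
have [a [[ek [-> ->]]|[ek [-> ->]]]] := half_cases k;
  have [b [[eb [-> ->]]|[eb [-> ->]]]] := half_cases k.-1; try lia.
- have -> : b = a.-1 by lia.
  case: a ek {eb} => [|a] ek; first by lia.
  rewrite /= bin2S; nia.
- have -> : b = a by lia.
  rewrite bin2S; nia.
Qed.

Lemma pow4_step k : k ^ 4 + k * 'C(k.+1, 2) + k.+1 <= k.+1 ^ 4.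
Proof. by have := bin2_mul2 k.+1; simpl => hc; nia. Qed.

Lemma loss_arith_cherry k d1 d2 SN SR : 8 <= k -> 0 < d1 -> d1 + d2 <= k./2 ->
  SN <= 'C(d1.-1, 2) + d1 -> SR <= (k - 1 - d1) * 'C(d1.-1, 2) ->
  SN + SR + d2 + 1 <= bip_c4_at k k./2.
Proof.
move=> hk d1p dd hN hR.
have g1 : bip_c4_at k d1.-1 <= bip_c4_at k (k./2).-1 by apply: bip_c4_at_mono; lia.
have g2 := bip_c4_at_half_gap hk.
have e : (k - 1 - d1) * 'C(d1.-1, 2) + 'C(d1.-1, 2) = bip_c4_at k d1.-1.
  rewrite /bip_c4_at; case: d1 d1p dd hN hR {g1} => // d _ dd _ _ /=.
  have -> : k - 1 - d = (k - 1 - d.+1).+1 by lia.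
  by rewrite mulSn addnC.
lia.
Qed.

Lemma loss_arith_low k d1 d2 SR : 8 <= k -> d1 < k./2 -> d1 + d2 <= k./2 ->
  SR <= bip_c4_at k d1 -> SR + d2 + 1 <= bip_c4_at k k./2.
Proof.
move=> hk dh dd hR.
have g1 : bip_c4_at k d1 <= bip_c4_at k (k./2).-1 by apply: bip_c4_at_mono; lia.
have g2 := bip_c4_at_half_gap hk.
lia.
Qed.

Lemma loss_arith_deficient k SR : 8 <= k ->
  SR <= 'C((k./2).-1, 2) + (k - 1 - k./2 - 1) * 'C(k./2, 2) -> SR + 1 <= bip_c4_at k k./2.
Proof.
move=> hk hR; rewrite /bip_c4_at.
have [h eh] : exists h, k./2 = h.+1 by exists (k./2).-1; lia.
rewrite eh bin2S /= in hR *.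
have -> : k - 1 - h.+1 = (k - 1 - h.+1 - 1).+1 by lia.
rewrite mulSn; lia.
Qed.

Definition adj n (F : {set {set 'I_n}}) (x y : 'I_n) := [set x; y] \in F.
Definition nbhd n (F : {set {set 'I_n}}) (U : {set 'I_n}) x := [set y in U | adj F x y].

Lemma adjC n (F : {set {set 'I_n}}) x y : adj F x y = adj F y x.
Proof. by rewrite /adj setUC. Qed.

Lemma in_nbhd n (F : {set {set 'I_n}}) (U : {set 'I_n}) x y :
  (y \in nbhd F U x) = (y \in U) && adj F x y.
Proof. by rewrite inE. Qed.

Section F2Free.
Variables (n : nat) (E : {set {set 'I_n}}).
Hypothesis simE : simple_graph E.
Hypothesis freeE : free F2 E.

Lemma adj_neq x y : adj E x y -> x != y.
Proof. by move=> /simE h; apply/eqP => xy; move: h; rewrite xy setUid cards1. Qed.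

Lemma no_fan u a b p q : adj E u a -> adj E u b -> adj E a b ->
  adj E u p -> adj E u q -> adj E p q ->
  a != p -> a != q -> b != p -> b != q -> False.
Proof.
move=> h1 h2 h3 h4 h5 h6 ap aq bp bq.
apply: (free_F2_no_fan freeE (u:=u) (a:=a) (b:=b) (p:=p) (q:=q)) => //.
by rewrite /= !inE !negb_or ap aq bp bq (adj_neq h1) (adj_neq h2) (adj_neq h3)
  (adj_neq h4) (adj_neq h5) (adj_neq h6).
Qed.

Section Link.
Variables (U : {set 'I_n}) (u : 'I_n).
Let N := nbhd E U u.
Hypothesis N_ge4 : 4 <= #|N|.
Hypothesis N_link : forall w, w \in N -> exists2 t, t \in N & adj E w t.

Let adjN y : y \in N -> adj E u y.
Proof. by rewrite in_nbhd => /andP[]. Qed.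

(* Two N-edges sharing no vertex would give two triangles through u meeting
   only in u, so the N-edges pairwise meet; as every vertex of N lies on one and
   |N| >= 4, they form a star spanning N. *)
Lemma link_center : exists2 x, x \in N & forall y, y \in N -> y != x -> adj E x y.
Proof.
have [w wN] : exists w, w \in N by apply/card_gt0P; lia.
have [a aN wa] := N_link wN.
have wa' : w != a := adj_neq wa.
have : 1 < #|N :\ w :\ a| by have := leq_card_setD2 N w a; lia.
case/card_gt1P => p [q [pN qN pq]].
move: pN qN; rewrite !inE => /and4P[pa pw pU pu] /and4P[qa qw qU qu].
have pN' : p \in N by rewrite inE pU pu.
have qN' : q \in N by rewrite inE qU qu.
have [p' p'N pp'] := N_link pN'.
have [q' q'N qq'] := N_link qN'.
have Hp' : (p' == w) || (p' == a).
  apply/negPn/negP; rewrite negb_or => /andP[p'w p'a].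
  apply: (no_fan (u:=u) (a:=w) (b:=a) (p:=p) (q:=p')); rewrite ?adjN //; by rewrite eq_sym.
have Hq' : (q' == w) || (q' == a).
  apply/negPn/negP; rewrite negb_or => /andP[q'w q'a].
  apply: (no_fan (u:=u) (a:=w) (b:=a) (p:=q) (q:=q')); rewrite ?adjN //; by rewrite eq_sym.
have pq' : p' = q'.
  apply/eqP/negPn/negP => ne.
  apply: (no_fan (u:=u) (a:=p) (b:=p') (p:=q) (q:=q')); rewrite ?adjN //.
  - by case/orP: Hq' => /eqP->.
  - by case/orP: Hp' => /eqP->; rewrite eq_sym.
subst q'; exists p' => // r rN rp'.
have [xb [xbN xxb xbx xbp xbq]] :
    exists xb, [/\ xb \in N, adj E p' xb, xb != p', xb != p & xb != q].
  case/orP: Hp' => /eqP ex.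
  - by exists a; rewrite -ex in wa wa' *; split => //; rewrite eq_sym.
  - by exists w; rewrite -ex in wa wa' *; rewrite adjC; split => //; rewrite eq_sym.
have [r' r'N rr'] := N_link rN.
case: (eqVneq r' p') => [e|r'p']; first by rewrite adjC -e.
have on_r s : s \in N -> adj E s p' -> (s == r) || (s == r').
  move=> sN sp'; apply/negPn/negP; rewrite negb_or => /andP[sr sr'].
  apply: (no_fan (u:=u) (a:=s) (b:=p') (p:=r) (q:=r')); rewrite ?adjN //; by rewrite eq_sym.
case/orP: (on_r p pN' pp') => /eqP e1; case/orP: (on_r q qN' qq') => /eqP e2;
  case/orP: (on_r xb xbN (etrans (adjC _ _ _) xxb)) => /eqP e3;
  by move: pq xbp xbq; rewrite e1 e2 e3 ?eqxx.
Qed.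

Lemma link_edge_center x y t : x \in N -> (forall y, y \in N -> y != x -> adj E x y) ->
  y \in N -> y != x -> t \in N -> adj E y t -> t = x.
Proof.
move=> xN xc yN yx tN yt; apply/eqP/negPn/negP => tx.
have : 0 < #|N :\ x :\ y :\ t| by have := leq_card_setD3 N x y t; lia.
case/card_gt0P => r; rewrite !inE => /and5P[rt ry rx rU ru].
have rN : r \in N by rewrite inE rU ru.
apply: (no_fan (u:=u) (a:=y) (b:=t) (p:=x) (q:=r)); rewrite ?adjN ?xc //; by rewrite eq_sym.
Qed.

End Link.

Section HighDegree.
Variable U : {set 'I_n}.
Hypothesis U_ge6 : 6 <= #|U|.
Hypothesis deg_gt_half : forall u, u \in U -> #|U|./2 < #|nbhd E U u|.

Let nbhd_ge4 u : u \in U -> 4 <= #|nbhd E U u|.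
Proof. by move/deg_gt_half; lia. Qed.

Let nbhd_sub u y : y \in nbhd E U u -> y \in U.
Proof. by rewrite in_nbhd => /andP[]. Qed.

Let nbhd_adj u y : y \in nbhd E U u -> adj E u y.
Proof. by rewrite in_nbhd => /andP[]. Qed.

Lemma edge_in_triangle u : u \in U -> forall w, w \in nbhd E U u ->
  exists2 t, t \in nbhd E U u & adj E w t.
Proof.
move=> uU w wN; have wU := nbhd_sub wN.
have : 0 < #|nbhd E U u :&: nbhd E U w|.
  have := deg_gt_half uU; have := deg_gt_half wU.
  have : #|nbhd E U u :|: nbhd E U w| <= #|U|.
    by apply/subset_leq_card/subsetP => y; rewrite inE => /orP[] /nbhd_sub.
  rewrite cardsU; lia.
case/card_gt0P => t; rewrite inE => /andP[tu tw].
by exists t => //; apply: nbhd_adj tw.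
Qed.

Lemma center_absorbs v x y s : v \in U -> x \in nbhd E U v ->
  (forall y, y \in nbhd E U v -> y != x -> adj E x y) ->
  y \in nbhd E U v -> y != x -> s \in nbhd E U y -> s != x -> adj E x s.
Proof.
move=> vU xN xc yN yx sN sx.
have yU := nbhd_sub yN.
have [xy xyN yc] := link_center (nbhd_ge4 yU) (edge_in_triangle yU).
have vNy : v \in nbhd E U y by rewrite in_nbhd vU adjC (nbhd_adj yN).
have xNy : x \in nbhd E U y by rewrite in_nbhd (nbhd_sub xN) adjC xc.
case: (eqVneq v xy) => [e|vxy].
- exfalso; subst xy.
  have : 0 < #|nbhd E U y :\ v :\ x|.
    by have := leq_card_setD2 (nbhd E U y) v x; have := nbhd_ge4 yU; lia.
  case/card_gt0P => r; rewrite !inE => /and4P[rx rv rU yr].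
  have rNy : r \in nbhd E U y by rewrite in_nbhd rU yr.
  have rNv : r \in nbhd E U v by rewrite in_nbhd rU (yc r rNy rv).
  by move: rx; rewrite (link_edge_center (nbhd_ge4 vU) xN xc yN yx rNv yr) eqxx.
- have exy := link_edge_center (nbhd_ge4 yU) xyN yc vNy vxy xNy (nbhd_adj xN).
  by subst xy; apply: yc.
Qed.

Lemma high_degree_contra : False.
Proof.
have [v vU] : exists v, v \in U by apply/card_gt0P; lia.
have [x xN xc] := link_center (nbhd_ge4 vU) (edge_in_triangle vU).
have : 1 < #|nbhd E U v :\ x|.
  by have := leq_card_setD1 (nbhd E U v) x; have := nbhd_ge4 vU; lia.
case/card_gt1P => y1 [y2 []]; rewrite !inE => /and3P[y1x y1U vy1] /and3P[y2x y2U vy2] y12.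
have y2N : y2 \in nbhd E U v by rewrite in_nbhd y2U vy2.
have : 0 < #|nbhd E U y2 :\ x :\ v :\ y1|.
  by have := leq_card_setD3 (nbhd E U y2) x v y1; have := nbhd_ge4 y2U; lia.
case/card_gt0P => p; rewrite !inE => /and5P[py1 pv px pU y2p].
have pN : p \in nbhd E U y2 by rewrite in_nbhd pU y2p.
apply: (no_fan (u:=x) (a:=v) (b:=y1) (p:=y2) (q:=p)) => //.
- by rewrite adjC nbhd_adj.
- by apply: xc; rewrite // in_nbhd y1U vy1.
- exact: xc.
- exact: (center_absorbs vU xN xc y2N y2x pN px).
- exact: adj_neq vy2.
- by rewrite eq_sym.
- by rewrite eq_sym.
Qed.

End HighDegree.

Lemma exists_low_degree (U : {set 'I_n}) : 6 <= #|U| ->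
  exists2 v, v \in U & #|nbhd E U v| <= #|U|./2.
Proof.
move=> hU; case: (boolP [exists v in U, #|nbhd E U v| <= #|U|./2]).
  by case/exists_inP => v vU hv; exists v.
move/exists_inPn => hdeg; exfalso; apply: (high_degree_contra hU) => u uU.
by rewrite ltnNge hdeg.
Qed.

End F2Free.

Section Coloured.
Variables (n : nat) (E E1 E2 : {set {set 'I_n}}).
Hypothesis simE : simple_graph E.
Hypothesis freeE : free F2 E.
Hypothesis sub1 : E1 \subset E.
Hypothesis sub2 : E2 \subset E.
Hypothesis dis12 : [disjoint E1 & E2].

Definition C4_in (U : {set 'I_n}) := #|[set p in copy_set C4 E1 | p.1 \subset U]|.
Definition E2_in (U : {set 'I_n}) := #|[set e in E2 | e \subset U]|.
Definition weight U := C4_in U + E2_in U.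

Definition codeg (U : {set 'I_n}) v z := #|nbhd E1 U v :&: nbhd E1 U z|.
Definition loss (U : {set 'I_n}) v :=
  \sum_(z in U :\ v) 'C(codeg U v z, 2) + #|nbhd E2 U v|.

Lemma adj1W x y : adj E1 x y -> adj E x y.
Proof. exact: (subsetP sub1). Qed.

Lemma adj2W x y : adj E2 x y -> adj E x y.
Proof. exact: (subsetP sub2). Qed.

Lemma nbhd1_adj (U : {set 'I_n}) v y : y \in nbhd E1 U v -> adj E v y.
Proof. by rewrite in_nbhd => /andP[_ /adj1W]. Qed.

Lemma weight_set0 : weight set0 = 0.
Proof.
rewrite /weight /C4_in /E2_in.
have -> : [set p in copy_set C4 E1 | p.1 \subset set0] = set0.
  apply/setP => p; rewrite in_set0; apply/negP; rewrite inE => /andP[pC].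
  case/copy_set_C4P: pC => _ [a [b [c [d [_ e1 _]]]]].
  by rewrite e1 subset0 => /eqP/setP/(_ a); rewrite !inE eqxx.
have -> : [set e in E2 | e \subset set0] = set0.
  apply/setP => e; rewrite !inE; apply/negP => /andP[eE].
  by rewrite subset0 => /eqP ee; have := simE (subsetP sub2 _ eE); rewrite ee cards0.
by rewrite !cards0.
Qed.

(* A colour-1 four-cycle through v is determined by its vertex z opposite to v
   and by the pair of common colour-1 neighbours of v and z it uses. *)
Definition c4_diag v z (P : {set 'I_n}) : {set 'I_n} * {set {set 'I_n}} :=
  (v |: (z |: P), [set [set v; x] | x in P] :|: [set [set z; x] | x in P]).

Definition diag_pairs (U : {set 'I_n}) v z :=
  [set P : {set 'I_n} | P \subset nbhd E1 U v :&: nbhd E1 U z & #|P| == 2].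

Lemma C4_at_vertex_diag (U : {set 'I_n}) (p : {set 'I_n} * {set {set 'I_n}}) a b c d :
  p.2 \subset E1 -> p.1 \subset U -> uniq [:: a; b; c; d] ->
  p.1 = [set a; b; c; d] -> p.2 = c4_edges a b c d ->
  p \in \bigcup_(z in U :\ a) [set c4_diag a z P | P in diag_pairs U a z].
Proof.
move=> sub sU un e1 e2; apply/bigcupP; exists c.
  rewrite !inE; move: un; rewrite /= !inE => /and4P[/norP[_ /norP[/eqP ac _]] _ _ _].
  rewrite eq_sym; apply/andP; split; first by apply/eqP.
  by apply: (subsetP sU); rewrite e1 !inE eqxx !orbT.
have inE1 x y : [set x; y] \in c4_edges a b c d -> adj E1 x y.
  by move=> h; rewrite /adj; apply: (subsetP sub); rewrite e2.
have inU x : x \in [set a; b; c; d] -> x \in U.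
  by move=> h; apply: (subsetP sU); rewrite e1.
apply/imsetP; exists [set b; d].
  rewrite inE; apply/andP; split.
    apply/subsetP => x; rewrite !inE => /orP[]/eqP->.
      rewrite !inU ?inE ?eqxx ?orbT //= inE1 ?(adjC E1 c b) ?inE1 //.
      by rewrite /c4_edges !inE eqxx ?orbT.
      by rewrite /c4_edges !inE eqxx ?orbT.
    rewrite !inU ?inE ?eqxx ?orbT //= ?(adjC E1 a d) inE1 ?inE1 //.
    by rewrite /c4_edges !inE eqxx ?orbT.
    by rewrite /c4_edges !inE eqxx ?orbT.
  move: un; rewrite /= !inE => /and4P[_ /norP[_ bd] _ _].
  by rewrite cards2 bd.
by rewrite [p]surjective_pairing /c4_diag e1 e2 c4_edges_diag set4_diag.
Qed.

Lemma C4_in_delete (U : {set 'I_n}) v : v \in U ->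
  C4_in U <= C4_in (U :\ v) + \sum_(z in U :\ v) 'C(codeg U v z, 2).
Proof.
move=> vU; rewrite /C4_in.
set S := [set p in copy_set C4 E1 | p.1 \subset U].
have sub : S \subset [set p in copy_set C4 E1 | p.1 \subset U :\ v] :|:
    \bigcup_(z in U :\ v) [set c4_diag v z P | P in diag_pairs U v z].
  apply/subsetP => p; rewrite inE => /andP[pC sU].
  case/copy_set_C4P: (pC) => sub [a [b [c [d [un e1 e2]]]]].
  case vp: (v \in p.1).
  - apply/setUP; right; rewrite e1 !inE in vp.
    repeat case/orP: vp => vp; move/eqP: vp => ->.
    + exact: (C4_at_vertex_diag sub sU un e1 e2).
    + apply: (C4_at_vertex_diag (a:=b) (b:=c) (c:=d) (d:=a) sub sU) => //.
      * by rewrite -uniq4_rot.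
      * by rewrite -set4_rot.
      * by rewrite -c4_edges_rot.
    + apply: (C4_at_vertex_diag (a:=c) (b:=d) (c:=a) (d:=b) sub sU) => //.
      * by rewrite -2!uniq4_rot.
      * by rewrite -2!set4_rot.
      * by rewrite -2!c4_edges_rot.
    + apply: (C4_at_vertex_diag (a:=d) (b:=a) (c:=b) (d:=c) sub sU) => //.
      * by rewrite uniq4_rot.
      * by rewrite set4_rot.
      * by rewrite c4_edges_rot.
  - apply/setUP; left; rewrite inE pC /=.
    apply/subsetP => x xp; rewrite !inE (subsetP sU) // andbT.
    by apply/negP => /eqP xv; rewrite -xv xp in vp.
apply: leq_trans (subset_leq_card sub) _.
apply: leq_trans (leq_card_setU _ _) _; rewrite leq_add2l.
apply: leq_trans (leq_card_bigcup _ _) _; apply: leq_sum => z _.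
apply: leq_trans (leq_imset_card _ _) _.
by rewrite /diag_pairs cards_draws.
Qed.

Lemma E2_in_delete (U : {set 'I_n}) v : v \in U ->
  E2_in U <= E2_in (U :\ v) + #|nbhd E2 U v|.
Proof.
move=> vU; rewrite /E2_in.
have sub : [set e in E2 | e \subset U] \subset [set e in E2 | e \subset U :\ v] :|:
   [set [set v; y] | y in nbhd E2 U v].
  apply/subsetP => e; rewrite inE => /andP[eE sU].
  case ve: (v \in e).
  - apply/setUP; right.
    have /eqP/cards2P [x [y [xy ee]]] := simE (subsetP sub2 _ eE); subst e.
    move: ve; rewrite !inE => /orP[]/eqP vx; subst v.
    + apply/imsetP; exists y => //; rewrite inE /adj eE andbT.
      by apply: (subsetP sU); rewrite !inE eqxx orbT.
    + apply/imsetP; exists x; last by rewrite setUC.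
      rewrite inE /adj setUC eE andbT.
      by apply: (subsetP sU); rewrite !inE eqxx.
  - apply/setUP; left; rewrite inE eE /=.
    apply/subsetP => x xp; rewrite !inE (subsetP sU) // andbT.
    by apply/negP => /eqP xv; rewrite -xv xp in ve.
apply: leq_trans (subset_leq_card sub) _.
apply: leq_trans (leq_card_setU _ _) _; rewrite leq_add2l.
exact: leq_imset_card.
Qed.

Lemma weight_delete (U : {set 'I_n}) v : v \in U -> weight U <= weight (U :\ v) + loss U v.
Proof.
move=> vU; have := C4_in_delete vU; have := E2_in_delete vU.
rewrite /weight /loss; lia.
Qed.

Lemma deg1_deg2_le (U : {set 'I_n}) v :
  #|nbhd E1 U v| + #|nbhd E2 U v| <= #|nbhd E U v|.
Proof.
rewrite -cardsUI.
have -> : nbhd E1 U v :&: nbhd E2 U v = set0.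
  apply/setP => x; rewrite !inE; apply/negP => /andP[/andP[_ h1] /andP[_ h2]].
  by move: h2; rewrite /adj (disjointFr dis12 h1).
rewrite cards0 addn0; apply: subset_leq_card; apply/subsetP => x.
by rewrite !inE => /orP[]/andP[-> h] /=; [apply: adj1W|apply: adj2W].
Qed.

Lemma sum_codeg_nbhd1 (U : {set 'I_n}) v :
  \sum_(z in nbhd E1 U v) 'C(codeg U v z, 2) <=
    'C(#|nbhd E1 U v|.-1, 2) + #|nbhd E1 U v|.
Proof.
set N1 := nbhd E1 U v.
case: (boolP [exists t in N1, 2 < codeg U v t]); last first.
  move/exists_inPn => h; apply: leq_trans (leq_addl _ _).
  rewrite -[X in _ <= X]muln1 -sum_nat_const; apply: leq_sum => z zN.
  by have := h z zN; rewrite -leqNgt; case: (codeg U v z) => [|[|[|]]].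
case/exists_inP => t tN /card_gt2P [a [b [c [[aI bI cI] [ab bc ca]]]]].
(* As v and t have three common neighbours, any common neighbour p != t of v
   and another z avoids one of them, r, and v t r, v z p form a fan. *)
have other z : z \in N1 -> z != t -> codeg U v z <= 1.
  move=> zN zt; rewrite leqNgt; apply/negP => /card_gt1P [p1 [p2 [p1I p2I p12]]].
  have eqt p : p \in N1 :&: nbhd E1 U z -> p = t.
    move=> pI; apply/eqP/negPn/negP => pt.
    have [r rabc /andP[rz rp]] := pick_other3 z p ab bc ca.
    have rI : r \in N1 :&: nbhd E1 U t by case/orP: rabc => [/orP[]|] /eqP->.
    move: rI pI; rewrite !inE => /andP[/andP[rU vr] /andP[_ tr]].
    move=> /andP[/andP[pU vp] /andP[_ zp]].
    apply: (no_fan simE freeE (u:=v) (a:=t) (b:=r) (p:=z) (q:=p)); solve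
      [exact: nbhd1_adj tN | exact: nbhd1_adj zN | exact: adj1W | done | by rewrite eq_sym].
  by move: p12; rewrite (eqt _ p1I) (eqt _ p2I) eqxx.
rewrite (bigD1 t) //= big1 ?addn0; last first.
  by move=> z /andP[zN zt]; rewrite bin_small // ltnS other.
apply: leq_trans (leq_addr _ _); apply: leq_bin2l.
rewrite (cardsD1 t N1) tN /=.
apply/subset_leq_card/subsetP => y; rewrite !inE => /andP[/andP[yU vy] /andP[_ ty]].
rewrite yU vy andbT andbT; apply: contraTneq ty => ->.
by apply/negP => /adj1W /(adj_neq simE); rewrite eqxx.
Qed.

Lemma codeg_lt_of_cherry (U : {set 'I_n}) v w a b z :
  w \in nbhd E1 U v -> a \in nbhd E1 U v -> b \in nbhd E1 U v -> a != b ->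
  adj E1 w a -> adj E1 w b -> z \in U :\ v -> z \notin nbhd E1 U v ->
  codeg U v z < #|nbhd E1 U v|.
Proof.
move=> wN aN bN ab wa wb zU znN.
have [s sN sz] : exists2 s, s \in nbhd E1 U v & s \notin nbhd E1 U z.
  case: (boolP (w \in nbhd E1 U z)) => wz; last by exists w.
  case: (boolP (a \in nbhd E1 U z)) => az; last by exists a.
  exfalso; move: wz az zU; rewrite !inE => /andP[_ zw] /andP[_ za] /andP[zv _].
  apply: (no_fan simE freeE (u:=w) (a:=z) (b:=a) (p:=v) (q:=b)).
  + by rewrite adjC adj1W.
  + exact: adj1W wa.
  + exact: adj1W za.
  + by rewrite adjC (nbhd1_adj wN).
  + exact: adj1W wb.
  + exact: nbhd1_adj bN.
  + exact: zv.
  + by apply: contraNneq znN => ->.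
  + by rewrite eq_sym (adj_neq simE (nbhd1_adj aN)).
  + exact: ab.
rewrite /codeg (cardsD1 s (nbhd E1 U v)) sN add1n ltnS.
apply/subset_leq_card/subsetP => y; rewrite !inE => /andP[yv yz].
rewrite yv andbT; apply: contraTneq yz => ->.
by move: sz; rewrite inE => /negbTE ->.
Qed.

Section Deletion.
Variables (U : {set 'I_n}) (v : 'I_n).
Hypothesis vU : v \in U.
Hypothesis U_ge8 : 8 <= #|U|.
Hypothesis deg_le_half : #|nbhd E U v| <= #|U|./2.

Let N1 := nbhd E1 U v.
Let R := (U :\ v) :\: N1.

Let deg12_le_half : #|N1| + #|nbhd E2 U v| <= #|U|./2.
Proof. exact: leq_trans (deg1_deg2_le U v) deg_le_half. Qed.

Let N1_sub : N1 \subset U :\ v.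
Proof.
apply/subsetP => y yN; have vy := adj_neq simE (nbhd1_adj yN).
by move: yN; rewrite in_nbhd !inE => /andP[-> _]; rewrite eq_sym vy.
Qed.

Let sum_codeg_split : \sum_(z in U :\ v) 'C(codeg U v z, 2) =
  \sum_(z in N1) 'C(codeg U v z, 2) + \sum_(z in R) 'C(codeg U v z, 2).
Proof. by rewrite (big_setID N1) /= (setIidPr N1_sub). Qed.

Let card_R : #|R| = #|U| - 1 - #|N1|.
Proof. by rewrite cardsD (setIidPr N1_sub) (cardsD1 v U) vU add1n subn1. Qed.

Let codeg_le z : codeg U v z <= #|N1|.
Proof. exact/subset_leq_card/subsetIl. Qed.

Let in_R z : z \in R -> z \in U :\ v /\ z \notin N1.
Proof. by rewrite inE => /andP[-> ->]. Qed.

Lemma loss_cherry w : w \in N1 -> 1 < codeg U v w -> loss U v + 1 <= bip_c4_at #|U| #|U|./2.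
Proof.
move=> wN /card_gt1P [a [b [aI bI ab]]].
move: aI bI; rewrite !in_setI => /andP[aN aw] /andP[bN bw].
move: aw bw; rewrite !in_nbhd => /andP[_ wa] /andP[_ wb].
rewrite /loss sum_codeg_split.
apply: (loss_arith_cherry (d1 := #|N1|)) => //.
- by apply/card_gt0P; exists w.
- exact: sum_codeg_nbhd1.
- rewrite -card_R -sum_nat_const; apply: leq_sum => z /in_R [zU zN].
  apply/leq_bin2l; move: (codeg_lt_of_cherry wN aN bN ab wa wb zU zN).
  by case: #|N1|.
Qed.

Hypothesis no_cherry : forall w, w \in N1 -> codeg U v w <= 1.

Let sum_codeg_N1 : \sum_(z in N1) 'C(codeg U v z, 2) = 0.
Proof. by apply: big1 => z /no_cherry zN; apply: bin_small. Qed.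

Lemma loss_low_degree : #|N1| < #|U|./2 -> loss U v + 1 <= bip_c4_at #|U| #|U|./2.
Proof.
move=> lt; rewrite /loss sum_codeg_split sum_codeg_N1 add0n.
apply: (loss_arith_low (d1 := #|N1|)) => //.
rewrite /bip_c4_at -card_R -sum_nat_const; apply: leq_sum => z _.
exact/leq_bin2l/codeg_le.
Qed.

Hypothesis N1_half : #|N1| = #|U|./2.

Lemma loss_deficient z0 : z0 \in R -> codeg U v z0 < #|N1| ->
  loss U v + 1 <= bip_c4_at #|U| #|U|./2.
Proof.
move=> z0R lt.
have d20 : #|nbhd E2 U v| = 0.
  by move: deg12_le_half; rewrite N1_half -{2}[_./2]addn0 leq_add2l leqn0 => /eqP.
rewrite /loss sum_codeg_split sum_codeg_N1 d20 add0n addn0.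
apply: loss_arith_deficient => //.
rewrite (bigD1 z0) //=; apply: leq_add.
  by apply: leq_bin2l; rewrite -N1_half; move: lt; case: #|N1|.
rewrite (eq_bigl [in R :\ z0]); last by move=> i; rewrite !inE andbC.
apply: (@leq_trans (\sum_(i in R :\ z0) 'C(#|N1|, 2))).
  by apply: leq_sum => i _; apply/leq_bin2l/codeg_le.
rewrite sum_nat_const N1_half leq_mul2r; apply/orP; right.
by have := cardsD1 z0 R; rewrite z0R card_R N1_half add1n => ->; rewrite subn1.
Qed.

End Deletion.

Lemma loss_small_or_complete (U : {set 'I_n}) v : v \in U -> 8 <= #|U| ->
  #|nbhd E U v| <= #|U|./2 ->
  loss U v + 1 <= bip_c4_at #|U| #|U|./2 \/
  #|nbhd E1 U v| = #|U|./2 /\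
  (forall x, x \in U :\: nbhd E1 U v -> forall y, y \in nbhd E1 U v -> adj E1 x y).
Proof.
move=> vU hU hd; set N1 := nbhd E1 U v.
case: (boolP [exists w in N1, 1 < codeg U v w]) => [/exists_inP[w wN hw]|/exists_inPn nc].
  by left; apply: (loss_cherry vU hU hd wN hw).
have nc' w : w \in N1 -> codeg U v w <= 1 by move/nc; rewrite -leqNgt.
have d1le : #|N1| <= #|U|./2 := leq_trans (leq_addr _ _) (leq_trans (deg1_deg2_le U v) hd).
case: (ltnP #|N1| #|U|./2) => [lt|ge]; first by left; apply: loss_low_degree.
have d1h : #|N1| = #|U|./2 by apply/eqP; rewrite eqn_leq d1le ge.
case: (boolP [exists z in (U :\ v) :\: N1, codeg U v z < #|N1|]).
  by case/exists_inP => z0 z0R lt; left; apply: (loss_deficient vU hU hd nc' d1h z0R lt).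
move/exists_inPn => full; right; split => // x xU y yN.
case: (eqVneq x v) => [->|xv]; first by move: yN; rewrite in_nbhd => /andP[].
have xR : x \in (U :\ v) :\: N1 by move: xU; rewrite !inE xv /= => /andP[-> ->].
have eqI : N1 :&: nbhd E1 U x = N1 by apply/eqP; rewrite eqEcard subsetIl leqNgt full.
have : y \in N1 :&: nbhd E1 U x by rewrite eqI.
by rewrite inE => /andP[_]; rewrite in_nbhd => /andP[_ ->].
Qed.

Section Bipartite.
Variables U B : {set 'I_n}.
Hypothesis B_sub : B \subset U.
Hypothesis complete1 : forall x, x \in U :\: B -> forall y, y \in B -> adj E1 x y.
Hypothesis B_ge3 : 3 <= #|B|.
Hypothesis A_ge3 : 3 <= #|U :\: B|.

Lemma adj1_cross z z' : z \in U -> z' \in U -> (z \in B) != (z' \in B) -> adj E1 z z'.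
Proof.
move=> zU z'U; case zB: (z \in B); case z'B: (z' \in B) => //= _.
- by rewrite adjC; apply: complete1 => //; rewrite inE z'B z'U.
- by apply: complete1 => //; rewrite inE zB zU.
Qed.

Lemma adj_cross z z' : z \in U -> z' \in U -> (z \in B) != (z' \in B) -> adj E z z'.
Proof. by move=> zU z'U zz'; apply/adj1W/adj1_cross. Qed.

Lemma side_neq z z' : (z \in B) != (z' \in B) -> z != z'.
Proof. by apply: contraNneq => ->. Qed.

Lemma pick_side (s : bool) x y : exists q, [/\ q \in U, (q \in B) = s, q != x & q != y].
Proof.
case: s.
- have : 0 < #|B :\ x :\ y| by have := leq_card_setD2 B x y; lia.
  case/card_gt0P => q; rewrite !inE => /and3P[qy qx qS]; exists q; split => //.
  exact: (subsetP B_sub).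
- have : 0 < #|(U :\: B) :\ x :\ y| by have := leq_card_setD2 (U :\: B) x y; lia.
  case/card_gt0P => q; rewrite !inE => /and4P[qy qx qB qU]; exists q; split => //.
  exact: negbTE.
Qed.

(* Each of the three lemmas below completes the given inner edges, through
   cross edges, to two triangles meeting in exactly one vertex. *)
Lemma no_inner_cherry s t t' : s \in U -> t \in U -> t' \in U ->
  (t \in B) = (s \in B) -> (t' \in B) = (s \in B) -> t != t' ->
  adj E s t -> adj E s t' -> False.
Proof.
move=> sU tU t'U ts t's tt' st st'.
have [q1 [q1U q1s _ _]] := pick_side (~~ (s \in B)) s s.
have [q2 [q2U q2s q21 _]] := pick_side (~~ (s \in B)) q1 q1.
apply: (no_fan simE freeE (u:=s) (a:=t) (b:=q1) (p:=t') (q:=q2)) => //.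
- by apply: adj_cross => //; rewrite q1s; case: (s \in B).
- by apply: adj_cross => //; rewrite q1s ts; case: (s \in B).
- by apply: adj_cross => //; rewrite q2s; case: (s \in B).
- by apply: adj_cross => //; rewrite q2s t's; case: (s \in B).
- by apply: side_neq; rewrite q2s ts; case: (s \in B).
- by apply: side_neq; rewrite q1s t's; case: (s \in B).
- by rewrite eq_sym.
Qed.

Lemma no_inner_matching x y x' y' : x \in U -> y \in U -> x' \in U -> y' \in U ->
  (y \in B) = (x \in B) -> (x' \in B) = (x \in B) -> (y' \in B) = (x \in B) ->
  x != x' -> x != y' -> y != x' -> y != y' ->
  adj E x y -> adj E x' y' -> False.
Proof.
move=> xU yU x'U y'U yx x'x y'x n1 n2 n3 n4 xy x'y'.
have [q [qU qs _ _]] := pick_side (~~ (x \in B)) x x.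
apply: (no_fan simE freeE (u:=q) (a:=x) (b:=y) (p:=x') (q:=y')) => //.
- by apply: adj_cross => //; rewrite qs; case: (x \in B).
- by apply: adj_cross => //; rewrite qs yx; case: (x \in B).
- by apply: adj_cross => //; rewrite qs x'x; case: (x \in B).
- by apply: adj_cross => //; rewrite qs y'x; case: (x \in B).
Qed.

Lemma no_inner_edges_both_sides x y x' y' : x \in U -> y \in U -> x' \in U -> y' \in U ->
  (y \in B) = (x \in B) -> (x' \in B) = ~~ (x \in B) -> (y' \in B) = ~~ (x \in B) ->
  adj E x y -> adj E x' y' -> False.
Proof.
move=> xU yU x'U y'U yx x'x y'x xy x'y'.
have [q [qU qs qx qy]] := pick_side (x \in B) x y.
apply: (no_fan simE freeE (u:=x') (a:=x) (b:=y) (p:=y') (q:=q)) => //.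
- by apply: adj_cross => //; rewrite x'x; case: (x \in B).
- by apply: adj_cross => //; rewrite x'x yx; case: (x \in B).
- by apply: adj_cross => //; rewrite x'x qs; case: (x \in B).
- by apply: adj_cross => //; rewrite y'x qs; case: (x \in B).
- by apply: side_neq; rewrite y'x; case: (x \in B).
- by rewrite eq_sym.
- by apply: side_neq; rewrite y'x yx; case: (x \in B).
- by rewrite eq_sym.
Qed.

Lemma inner_edge_unique x y x' y' : x \in U -> y \in U -> x' \in U -> y' \in U ->
  adj E x y -> adj E x' y' -> (y \in B) = (x \in B) -> (y' \in B) = (x' \in B) ->
  [set x; y] = [set x'; y'].
Proof.
move=> xU yU x'U y'U xy x'y' yx y'x'.
case: (boolP ([set x; y] == [set x'; y'])) => [/eqP //|ne]; exfalso.
case: (eqVneq (x' \in B) (x \in B)) => [sd|sd]; last first.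
  apply: (no_inner_edges_both_sides xU yU x'U y'U yx) => //.
  - by move: sd; case: (x' \in B); case: (x \in B).
  - by rewrite y'x'; move: sd; case: (x' \in B); case: (x \in B).
have y'x : (y' \in B) = (x \in B) by rewrite y'x'.
case: (eqVneq x x') => [e|n1].
  subst x'; apply: (no_inner_cherry xU yU y'U yx y'x _ xy x'y').
  by apply: contra ne => /eqP->.
case: (eqVneq x y') => [e|n2].
  subst y'; apply: (no_inner_cherry xU yU x'U yx sd _ xy); last by rewrite adjC.
  by apply: contra ne => /eqP->; rewrite setUC.
case: (eqVneq y x') => [e|n3].
  subst x'; apply: (no_inner_cherry yU xU y'U (esym yx) y'x' n2 _ x'y').
  by rewrite adjC.
case: (eqVneq y y') => [e|n4].
  subst y'; apply: (no_inner_cherry yU xU x'U (esym yx) _ n1); first by rewrite sd yx.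
  - by rewrite adjC.
  - by rewrite adjC.
exact: (no_inner_matching xU yU x'U y'U yx sd y'x n1 n2 n3 n4 xy x'y').
Qed.

Lemma E2_in_bipartite : E2_in U <= 1.
Proof.
apply/card_le1_eqP => e e'; rewrite !inE => /andP[eE eU] /andP[e'E e'U].
have inner f : f \in E2 -> f \subset U -> exists x y,
    [/\ f = [set x; y], x \in U, y \in U, adj E x y & (y \in B) = (x \in B)].
  move=> fE fU.
  have /eqP/cards2P [x [y [xy ef]]] := simE (subsetP sub2 _ fE); subst f.
  have xU : x \in U by apply: (subsetP fU); rewrite !inE eqxx.
  have yU : y \in U by apply: (subsetP fU); rewrite !inE eqxx orbT.
  exists x, y; split => //; first exact: adj2W.
  apply/eqP/negPn/negP => sd.
  by move: fE; rewrite (disjointFr dis12 (adj1_cross xU yU _)) // eq_sym.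
have [x [y [-> xU yU xy sxy]]] := inner e eE eU.
have [x' [y' [-> x'U y'U x'y' sx'y']]] := inner e' e'E e'U.
exact: inner_edge_unique.
Qed.

Lemma common_nbr_side a z t : a \in U -> z \in U -> t \in U -> a != z ->
  (z \in B) = (a \in B) -> adj E a t -> adj E z t -> (t \in B) != (a \in B).
Proof.
move=> aU zU tU az za hat zt; apply/negP => /eqP ta.
have := inner_edge_unique aU tU zU tU hat zt ta (etrans ta (esym za)).
case/set2_inj => [[e _]|[e1 e2]]; first by rewrite e eqxx in az.
by subst; rewrite eqxx in az.
Qed.

Lemma common_nbr_cross a z t1 t2 : a \in U -> z \in U -> t1 \in U -> t2 \in U ->
  (z \in B) != (a \in B) -> adj E a t1 -> adj E z t1 -> adj E a t2 -> adj E z t2 ->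
  t1 = t2.
Proof.
move=> aU zU t1U t2U za at1 zt1 at2 zt2.
have zb : (z \in B) = ~~ (a \in B) by move: za; case: (z \in B); case: (a \in B).
have side t : (t \in B) = (a \in B) \/ (t \in B) = (z \in B).
  by rewrite zb; case: (t \in B); case: (a \in B); auto.
case: (side t1) => s1; case: (side t2) => s2.
- case/set2_inj: (inner_edge_unique aU t1U aU t2U at1 at2 s1 s2) => [[_ //]|[e1 e2]].
  by subst; have := adj_neq simE at1; rewrite eqxx.
- case/set2_inj: (inner_edge_unique aU t1U zU t2U at1 zt2 s1 s2) => [[e _]|[e1 e2]].
    by move: za; rewrite e eqxx.
  by move: za; rewrite e1 s2 eqxx.
- case/set2_inj: (inner_edge_unique zU t1U aU t2U zt1 at2 s1 s2) => [[e _]|[e1 e2]].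
    by move: za; rewrite e eqxx.
  by move: za; rewrite e1 s2 eqxx.
- case/set2_inj: (inner_edge_unique zU t1U zU t2U zt1 zt2 s1 s2) => [[_ //]|[e1 e2]].
  by subst; have := adj_neq simE zt1; rewrite eqxx.
Qed.

Lemma codeg_cross_le1 (W : {set 'I_n}) a z : W \subset U -> a \in W -> z \in W ->
  (z \in B) != (a \in B) -> codeg W a z <= 1.
Proof.
move=> WU aW zW za; have inU := subsetP WU.
apply/card_le1_eqP => t1 t2; rewrite !inE.
move=> /andP[/andP[t1W at1] /andP[_ zt1]] /andP[/andP[t2W at2] /andP[_ zt2]].
by apply/esym/(common_nbr_cross (inU _ aW) (inU _ zW) (inU _ t1W) (inU _ t2W) za);
  apply: adj1W.
Qed.

Lemma codeg_same_side_le (W : {set 'I_n}) a z : W \subset U -> a \in W -> z \in W -> a != z ->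
  a \notin B -> z \notin B -> codeg W a z <= #|B|.
Proof.
move=> WU aW zW az aB zB; have inU := subsetP WU.
apply/subset_leq_card/subsetP => t; rewrite !inE => /andP[/andP[tW at1] /andP[_ zt]].
have zaB : (z \in B) = (a \in B) by rewrite (negbTE aB) (negbTE zB).
have := common_nbr_side (inU _ aW) (inU _ zW) (inU _ tW) az zaB (adj1W at1) (adj1W zt).
by rewrite (negbTE aB); case: (t \in B).
Qed.

Lemma C4_in_part : C4_in B = 0.
Proof.
apply/eqP; rewrite cards_eq0; apply/eqP/setP => p; rewrite in_set0 inE.
apply/negP => /andP[/copy_set_C4P [sub [a [b [c [d [un e1 e2]]]]]] pB].
have inB x : x \in [set a; b; c; d] -> x \in B by rewrite -e1; apply: (subsetP pB).
have inU x : x \in [set a; b; c; d] -> x \in U by move/inB/(subsetP B_sub).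
have inE1 x y : [set x; y] \in c4_edges a b c d -> adj E x y.
  by rewrite -e2 => /(subsetP sub)/adj1W.
have [aB bB cB] : [/\ a \in B, b \in B & c \in B] by split; apply: inB; rewrite !inE eqxx ?orbT.
apply: (no_inner_cherry (s:=b) (t:=a) (t':=c)); rewrite ?inU ?aB ?bB ?cB ?inE ?eqxx ?orbT //.
- by move: un; rewrite /= !inE => /and4P[/norP[_ /norP[]]].
- by rewrite adjC inE1 // !inE eqxx.
- by rewrite inE1 // !inE eqxx ?orbT.
Qed.

(* Deleting a vertex a of the part U :\: B destroys at most C(|B|,2) four-cycles
   having a and z as opposite vertices for each other z in that part, and none
   with z in B. *)
Lemma C4_in_bipartite (A : {set 'I_n}) : A \subset U :\: B ->
  C4_in (A :|: B) <= 'C(#|A|, 2) * 'C(#|B|, 2).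
Proof.
move: {2}#|A| (erefl #|A|) => m; elim: m A => [|m IH] A hm hA.
  by rewrite (cards0_eq hm) set0U C4_in_part.
have [a aA] : exists a, a \in A by apply/card_gt0P; rewrite hm.
have AB_U : A :|: B \subset U.
  by rewrite subUset B_sub andbT (subset_trans hA) ?subsetDl.
have [aB aU] : a \notin B /\ a \in U by move: (subsetP hA a aA); rewrite inE => /andP[].
have aAB : a \in A :|: B by rewrite inE aA.
have eqU : (A :|: B) :\ a = (A :\ a) :|: B.
  apply/setP => z; rewrite !inE; case: (eqVneq z a) => [->|//].
  by rewrite (negbTE aB).
have hm' : #|A :\ a| = m by move: hm; rewrite (cardsD1 a A) aA add1n => -[].
have IHa := IH (A :\ a) hm' (subset_trans (subsetDl _ _) hA).
have hsum : \sum_(z in (A :\ a) :|: B) 'C(codeg (A :|: B) a z, 2) <= m * 'C(#|B|, 2).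
  rewrite (big_setID B) /= big1 ?add0n; last first.
    move=> z /setIP[_ zB]; apply: bin_small; rewrite ltnS.
    by apply: codeg_cross_le1; rewrite // ?inE ?zB ?orbT // (negbTE aB).
  apply: (@leq_trans (\sum_(z in ((A :\ a) :|: B) :\: B) 'C(#|B|, 2))).
    apply: leq_sum => z; rewrite !inE => /andP[zB /orP[/andP[za zA]|]]; last first.
      by rewrite (negbTE zB).
    apply/leq_bin2l/codeg_same_side_le => //; first by rewrite inE zA.
    by rewrite eq_sym.
  have sub : ((A :\ a) :|: B) :\: B \subset A :\ a.
    by apply/subsetP => z; rewrite !inE => /andP[/negbTE-> /orP[]].
  by rewrite sum_nat_const -hm' leq_mul2r (subset_leq_card sub) orbT.
apply: leq_trans (C4_in_delete aAB) _; rewrite eqU.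
apply: leq_trans (leq_add IHa hsum) _.
by rewrite hm hm' bin2S mulnDl.
Qed.

Lemma weight_bipartite : weight U <= 'C(#|U :\: B|, 2) * 'C(#|B|, 2) + 1.
Proof.
apply: leq_add E2_in_bipartite.
have eqU : (U :\: B) :|: B = U.
  apply/setP => x; rewrite !inE; case xB: (x \in B); rewrite /= ?andbT ?orbF //.
  by rewrite (subsetP B_sub) ?xB.
by have := C4_in_bipartite (subxx (U :\: B)); rewrite eqU.
Qed.

End Bipartite.

Lemma weight_le_pow4 (U : {set 'I_n}) : weight U <= #|U| ^ 4.
Proof.
move: {2}#|U| (erefl #|U|) => k; elim: k U => [|k IH] U hk.
  by rewrite (cards0_eq hk) weight_set0.
have [v vU] : exists v, v \in U by apply/card_gt0P; rewrite hk.
have hk' : #|U :\ v| = k by move: hk; rewrite (cardsD1 v U) vU add1n => -[].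
have hsum : \sum_(z in U :\ v) 'C(codeg U v z, 2) <= k * 'C(k.+1, 2).
  rewrite -hk -hk' -sum_nat_const; apply: leq_sum => z _; apply: leq_bin2l.
  by apply/subset_leq_card/subsetP => y; rewrite !inE => /andP[/andP[]].
have hdeg2 : #|nbhd E2 U v| <= k.+1.
  by rewrite -hk; apply/subset_leq_card/subsetP => y; rewrite inE => /andP[].
apply: leq_trans (weight_delete vU) _; rewrite /loss hk addnA.
apply: (leq_trans _ (pow4_step k)).
have := IH _ hk'; rewrite ?hk' => hw.
exact: leq_add (leq_add hw hsum) hdeg2.
Qed.

(* The slack B0 - |U| absorbs the crude bound below 9 vertices: every deletion
   step on at least 9 vertices gains 1 on the target, paying one unit of it. *)
Definition B0 := 8 ^ 4 + 8.

Lemma weight_le_target (U : {set 'I_n}) : weight U <= target #|U| + 1 + (B0 - #|U|).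
Proof.
move: {2}#|U| (erefl #|U|) => k; elim: k U => [|k IH] U hk.
  by rewrite (cards0_eq hk) weight_set0.
case: (leqP k.+1 8) => [small|big].
  apply: leq_trans (weight_le_pow4 U) _; rewrite hk.
  have : k.+1 ^ 4 <= 8 ^ 4 by rewrite leq_exp2r.
  by rewrite /B0; lia.
have U_ge8 : 8 <= #|U| by rewrite hk ltnW.
have [v vU hd] := exists_low_degree simE freeE (ltnW (ltnW U_ge8)).
have hk' : #|U :\ v| = k by move: hk; rewrite (cardsD1 v U) vU add1n => -[].
case: (loss_small_or_complete vU U_ge8 hd) => [hloss|[hN1 hcomplete]].
  have := target_rec (ltn0Sn k); have := IH _ hk'; have := weight_delete vU.
  move: hloss; rewrite hk hk' /=.
  move: (weight U) (weight (U :\ v)) (loss U v) (target k) (target k.+1) (bip_c4_at _ _).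
  by move=> *; lia.
set B := nbhd E1 U v in hN1 hcomplete.
have B_sub : B \subset U by apply/subsetP => y; rewrite inE => /andP[].
have hA : #|U :\: B| = uphalf #|U| by rewrite cardsDS // hN1; lia.
have B_ge3 : 3 <= #|B| by rewrite hN1; lia.
have A_ge3 : 3 <= #|U :\: B| by rewrite hA; lia.
apply: leq_trans (weight_bipartite B_sub hcomplete B_ge3 A_ge3) _.
by rewrite hA hN1 mulnC; apply: leq_addr.
Qed.

End Coloured.

Lemma col_count_le n (E : {set {set 'I_n}}) (c : {set 'I_n} -> bool) :
  simple_graph E -> free F2 E -> B0 <= n ->
  col_count C4 K2 E c <= 'C(n./2, 2) * 'C(uphalf n, 2) + 1.
Proof.
move=> simE freeE hn.
set E1 := colour_class E c true; set E2 := colour_class E c false.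
have sub1 : E1 \subset E by apply/subsetP => e; rewrite inE => /andP[].
have sub2 : E2 \subset E by apply/subsetP => e; rewrite inE => /andP[].
have dis12 : [disjoint E1 & E2].
  rewrite disjoints_subset; apply/subsetP => e.
  by rewrite !inE => /andP[_ /eqP ->]; rewrite andbF.
have := weight_le_target simE freeE sub1 sub2 dis12 setT.
rewrite cardsT card_ord (_ : B0 - n = 0) ?addn0; last by apply/eqP; rewrite subn_eq0.
rewrite /col_count /weight /target.
have -> : copies C4 E1 = C4_in E1 setT.
  by rewrite -card_copy_set /C4_in; apply: eq_card => p; rewrite !inE subsetT andbT.
have -> : copies K2 E2 = E2_in E2 setT.
  rewrite copies_K2; last by move=> e /(subsetP sub2) /simE.
  by rewrite /E2_in; apply: eq_card => e; rewrite !inE subsetT andbT.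
done.
Qed.

Lemma exists_set_card n k : k <= n -> exists A : {set 'I_n}, #|A| = k.
Proof.
move=> kn; have : 0 < #|[set A : {set 'I_n} | #|A| == k]|.
  by rewrite card_draws card_ord bin_gt0.
by case/card_gt0P => A; rewrite inE => /eqP hA; exists A.
Qed.

Lemma uniq5_inj (T : eqType) (g : nat -> T) : uniq [:: g 0; g 1; g 2; g 3; g 4] ->
  forall i k, i < 5 -> k < 5 -> g i = g k -> i = k.
Proof.
move=> un i k hi hk.
case: i hi => [|[|[|[|[|i]]]]] // _; case: k hk => [|[|[|[|[|k]]]]] // _ e;
  apply/eqP; move: un; (try rewrite e); by rewrite /= !inE ?eqxx /= ?orbT /= ?andbF.
Qed.

Lemma fan_edges_neq (T : finType) (g : nat -> T) i j k l :
  uniq [:: g 0; g 1; g 2; g 3; g 4] -> i < 5 -> j < 5 -> k < 5 -> l < 5 ->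
  ~~ ((i \in [:: k; l]) && (j \in [:: k; l])) -> [set g i; g j] <> [set g k; g l].
Proof.
move=> un hi hj hk hl hn /set2_inj [[e1 e2]|[e1 e2]].
- have ei := uniq5_inj un hi hk e1; have ej := uniq5_inj un hj hl e2.
  by rewrite ei ej !inE !eqxx /= ?orbT in hn.
- have ei := uniq5_inj un hi hl e1; have ej := uniq5_inj un hj hk e2.
  by rewrite ei ej !inE !eqxx /= ?orbT in hn.
Qed.

Section Extremal.
Variables (n : nat) (A : {set 'I_n}) (x0 x1 : 'I_n).
Hypothesis x01 : x0 != x1.
Hypothesis x0A : x0 \notin A.
Hypothesis x1A : x1 \notin A.

Definition extremal_graph : {set {set 'I_n}} :=
  [set e : {set 'I_n} | [exists x, [exists y, [&& x \in A, y \notin A & e == [set x; y]]]]]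
  :|: [set [set x0; x1]].

Definition extremal_colour (e : {set 'I_n}) := e != [set x0; x1].

Lemma extremal_cross x y : x \in A -> y \notin A -> [set x; y] \in extremal_graph.
Proof.
move=> xA yA; rewrite !inE; apply/orP; left.
by apply/existsP; exists x; apply/existsP; exists y; rewrite xA yA eqxx.
Qed.

Lemma extremal_edge x y : [set x; y] \in extremal_graph ->
  (x \in A) != (y \in A) \/ [set x; y] = [set x0; x1].
Proof.
rewrite !inE => /orP[/existsP[a /existsP[b /and3P[aA bA /eqP e]]]|/eqP e]; last by right.
left; case/set2_inj: e => [[-> ->]|[-> ->]]; by rewrite aA (negbTE bA).
Qed.

Lemma extremal_triangle a b c : [set a; b] \in extremal_graph ->
  [set a; c] \in extremal_graph -> [set b; c] \in extremal_graph ->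
  [\/ [set a; b] = [set x0; x1], [set a; c] = [set x0; x1] | [set b; c] = [set x0; x1]].
Proof.
case/extremal_edge => [h1|->]; last by constructor 1.
case/extremal_edge => [h2|->]; last by constructor 2.
case/extremal_edge => [h3|->]; last by constructor 3.
by move: h1 h2 h3; case: (a \in A); case: (b \in A); case: (c \in A).
Qed.

Lemma extremal_simple : simple_graph extremal_graph.
Proof.
move=> e; rewrite !inE => /orP[/existsP[a /existsP[b /and3P[aA bA /eqP ->]]]|/eqP ->].
- by rewrite cards2; case: eqP => // ab; move: bA; rewrite -ab aA.
- by rewrite cards2 x01.
Qed.

(* Every triangle contains the edge x0 x1, so no two triangles are edge-disjoint. *)
Lemma extremal_free : free F2 extremal_graph.
Proof.
apply/eqP; rewrite -card_copy_set cards_eq0; apply/eqP/setP => p.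
rewrite in_set0; apply/negP => /copy_set_F2_fan [g [un h01 h02 h12 [h03 h04 h34]]].
case: (extremal_triangle h01 h02 h12) => e1; case: (extremal_triangle h03 h04 h34) => e2;
  by rewrite -e2 in e1; apply: (fan_edges_neq un _ _ _ _ _ e1).
Qed.

Lemma eq_sidesF x y : x \in A -> y \notin A -> (x == y) = false.
Proof. by move=> xA yA; apply/negbTE; apply: contraNneq yA => <-. Qed.

Lemma extremal_cross1 x y : x \in A -> y \notin A ->
  [set x; y] \in colour_class extremal_graph extremal_colour true.
Proof.
move=> xA yA; rewrite inE extremal_cross //= /extremal_colour eqb_id.
apply/eqP => /setP/(_ x); rewrite !inE eqxx /= => /esym/orP[]/eqP e.
- by move: x0A; rewrite -e xA.
- by move: x1A; rewrite -e xA.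
Qed.

Lemma extremal_K2 : copies K2 (colour_class extremal_graph extremal_colour false) = 1.
Proof.
have -> : colour_class extremal_graph extremal_colour false = [set [set x0; x1]].
  apply/setP => e; rewrite inE [in RHS]inE /extremal_colour.
  case: (eqVneq e [set x0; x1]) => [->|ne] /=; last by rewrite andbF.
  by rewrite /extremal_graph !inE eqxx ?orbT ?andbT.
by rewrite copies_K2 ?cards1 // => e; rewrite inE => /eqP ->; rewrite cards2 x01.
Qed.

Lemma c4_parts a1 a2 b1 b2 : a1 \in A -> a2 \in A -> b1 \notin A -> b2 \notin A ->
  [set a1; b1; a2; b2] :&: A = [set a1; a2] /\ [set a1; b1; a2; b2] :&: ~: A = [set b1; b2].
Proof.
move=> a1A a2A b1A b2A; split; apply/setP => x; rewrite !inE; case xA: (x \in A).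
all: try (rewrite (eq_sidesF xA b1A) (eq_sidesF xA b2A)).
all: try (rewrite (eq_sym x a1) (eq_sym x a2) (eq_sidesF a1A (negbT xA))
            (eq_sidesF a2A (negbT xA))).
all: by rewrite /= ?orbF ?andbT ?andbF.
Qed.

(* Each pair in A and each pair outside A span a colour-1 four-cycle, and the
   four-cycle gives back the two pairs as its intersections with A and ~: A. *)
Lemma extremal_C4 :
  'C(#|A|, 2) * 'C(#|~: A|, 2) <=
    copies C4 (colour_class extremal_graph extremal_colour true).
Proof.
set D := fun X : {set 'I_n} => [set P : {set 'I_n} | P \subset X & #|P| == 2].
have sub : setX (D A) (D (~: A)) \subset
    [set (p.1 :&: A, p.1 :&: ~: A)
      | p in copy_set C4 (colour_class extremal_graph extremal_colour true)].
  apply/subsetP => -[P Q]; rewrite inE /= !inE.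
  move=> /andP[/andP[PA /cards2P [a1 [a2 [a12 eP]]]] /andP[QB /cards2P [b1 [b2 [b12 eQ]]]]].
  subst P Q.
  have a1A : a1 \in A by apply: (subsetP PA); rewrite !inE eqxx.
  have a2A : a2 \in A by apply: (subsetP PA); rewrite !inE eqxx orbT.
  have b1A : b1 \notin A by have := subsetP QB b1; rewrite !inE eqxx /= => /(_ isT).
  have b2A : b2 \notin A by have := subsetP QB b2; rewrite !inE eqxx orbT /= => /(_ isT).
  apply/imsetP; exists ([set a1; b1; a2; b2], c4_edges a1 b1 a2 b2).
  - apply/copy_set_C4P; split.
    + apply/subsetP => e H; rewrite /c4_edges !inE in H.
      repeat case/orP: H => H; move/eqP: H => ->;
        first [by apply: extremal_cross1 | by rewrite setUC; apply: extremal_cross1].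
    + exists a1, b1, a2, b2; split => //.
      by rewrite /= !inE (eq_sidesF a1A b1A) (eq_sidesF a1A b2A) (negbTE a12)
        (negbTE b12) (eq_sym b1 a2) (eq_sidesF a2A b1A) (eq_sidesF a2A b2A).
  - by have [-> ->] := c4_parts a1A a2A b1A b2A.
rewrite -(cards_draws A 2) -(cards_draws (~: A) 2) -cardsX.
apply: leq_trans (subset_leq_card sub) _.
by rewrite -card_copy_set; apply: leq_imset_card.
Qed.

Lemma extremal_col_count :
  'C(#|A|, 2) * 'C(#|~: A|, 2) + 1 <= col_count C4 K2 extremal_graph extremal_colour.
Proof. by rewrite /col_count extremal_K2 leq_add2r extremal_C4. Qed.

End Extremal.

Theorem mainTheorem9 : exists N : nat, forall n : nat, N <= n ->
  (forall (E : {set {set 'I_n}}) (c : {set 'I_n} -> bool),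
     simple_graph E -> free F2 E ->
     col_count C4 K2 E c <= 'C(n./2, 2) * 'C(uphalf n, 2) + 1) /\
  (exists (E : {set {set 'I_n}}) (c : {set 'I_n} -> bool),
     [/\ simple_graph E, free F2 E &
     col_count C4 K2 E c = 'C(n./2, 2) * 'C(uphalf n, 2) + 1]).
Proof.
exists B0 => n hn; split=> [E c simE freeE|]; first exact: col_count_le.
have [A hA] : exists A : {set 'I_n}, #|A| = n./2 by apply: exists_set_card; lia.
have hC : #|~: A| = uphalf n by rewrite cardsCs setCK card_ord hA; lia.
have : 1 < #|~: A| by rewrite hC /B0 in hn *; lia.
case/card_gt1P => x0 [x1 [x0A x1A x01]]; rewrite !inE in x0A x1A.
exists (extremal_graph A x0 x1), (extremal_colour x0 x1).
have simG : simple_graph (extremal_graph A x0 x1) by apply: extremal_simple.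
have freeG : free F2 (extremal_graph A x0 x1) by apply: extremal_free.
split=> //; apply/eqP; rewrite eqn_leq col_count_le //=.
by rewrite -hA -hC extremal_col_count.
Qed.
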